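(* Let $n\ge 5$. Then the strong metric dimension of $L(n)$ is $n(n-2)$.
   Context: For $n\ge 5$, $H(n)$ is the graph with vertex set $V_1\cup V_2$, where $V_1=\{v_1,\dots,v_n\}$ and $V_2=\{v_iv_j: 1\le i<j\le n\}$, and $v_r$ is adjacent to $v_iv_j$ iff $r\in\{i,j\}$ (no other edges). $L(n)$ is the line graph of $H(n)$: its vertices are the edges of $H(n)$, two being adjacent iff they share an endpoint. A set $Q\subseteq V(G)$ is a strong resolving set of $G$ if for any two distinct vertices $p,q$ there is $s\in Q$ such that $p$ lies on some shortest $q$–$s$ path or $q$ lies on some shortest $p$–$s$ path; the strong metric dimension is the minimum size of a strong resolving set. *)

From mathcomp Require Import all_boot.
Set Implicit Arguments.
Unset Strict Implicit.
Unset Printing Implicit Defensive.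

(* A walk from q of length (size w) is a sequence w with path e q w;
   it ends at last q w.  A shortest q-s path is a q-s walk of minimal length
   (minimal walks are automatically paths). *)
Definition shortest_path (T : finType) (e : rel T) (q s : T) (w : seq T) : Prop :=
  [/\ path e q w, last q w = s &
      forall w' : seq T, path e q w' -> last q w' = s -> size w <= size w'].

Definition on_shortest (T : finType) (e : rel T) (q s p : T) : Prop :=
  exists w, shortest_path e q s w /\ p \in q :: w.

Definition strong_resolving (T : finType) (e : rel T) (Q : {set T}) : Prop :=
  forall p q : T, p != q ->
    exists2 s, s \in Q & (on_shortest e q s p \/ on_shortest e p s q).

Definition is_strong_metric_dim (T : finType) (e : rel T) (k : nat) : Prop :=
  (exists Q : {set T}, strong_resolving e Q /\ #|Q| = k) /\
  (forall Q : {set T}, strong_resolving e Q -> k <= #|Q|).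

Definition is_edge (T : finType) (e : rel T) (E : {set T}) : bool :=
  [exists x, exists y, e x y && (E == [set x; y])].

Definition line_vertex (T : finType) (e : rel T) :=
  {E : {set T} | is_edge e E}.

Definition line_adj (T : finType) (e : rel T) : rel (line_vertex e) :=
  fun E F => (val E != val F) && (val E :&: val F != set0).

(* V1 = 'I_n (v_r), V2 = pairs (i,j) with i < j (v_i v_j) *)
Definition Hvert (n : nat) : finType :=
  ('I_n + {p : 'I_n * 'I_n | p.1 < p.2})%type.

Definition Hadj (n : nat) : rel (Hvert n) :=
  fun x y =>
    match x, y with
    | inl r, inr p => (r == (val p).1) || (r == (val p).2)
    | inr p, inl r => (r == (val p).1) || (r == (val p).2)
    | _, _ => false
    end.

Definition Lvert (n : nat) : finType := line_vertex (@Hadj n).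
Definition Ladj (n : nat) : rel (Lvert n) := @line_adj (Hvert n) (@Hadj n).

(* A vertex of L(n) is an edge v_r -- v_r v_j of H(n), i.e. an ordered pair
   (r, j) of distinct indices, and the distance of L(n) is an explicit
   function of two such pairs, of diameter 3.  If p and q are at distance 3, a
   vertex s with p on a shortest q-s path must be p itself, so the complement
   of a strong resolving set contains no two vertices at distance 3.  Such a
   set has at most n elements: either its vertices have distinct hubs r, or
   it lies in a star {(h, _)} plus at most one vertex (_, h).  Conversely, the
   complement of the star at 0 together with (1, 0) is strongly resolving. *)

From mathcomp Require Import all_boot zify.
Set Implicit Arguments. Unset Strict Implicit.

Section DistanceFunction.

Variables (T : finType) (e : rel T) (d : T -> T -> nat).
Hypothesis d_refl : forall x, d x x = 0.
Hypothesis d_eq0 : forall x y, d x y = 0 -> x = y.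
Hypothesis d_edge : forall x y z, e x y -> d x z <= (d y z).+1.
Hypothesis d_descent : forall x z, x != z -> exists2 y, e x y & (d y z).+1 = d x z.

Lemma dist_le_walk q w : path e q w -> d q (last q w) <= size w.
Proof.
elim: w q => [|x w IHw] q /=; first by rewrite d_refl.
by case/andP=> qx /IHw xw; apply: leq_trans (d_edge _ qx) _; rewrite ltnS.
Qed.

Lemma geodesic_exists q s :
  exists w, [/\ path e q w, last q w = s & size w = d q s].
Proof.
move: {2}(d q s) (erefl (d q s)) => k; elim: k q => [|k IHk] q dqs.
  by exists [::]; rewrite (d_eq0 dqs).
have /d_descent [y qy dys] : q != s by apply: contra_eqN dqs => /eqP->; rewrite d_refl.
have [|w [yw wy sw]] := IHk y; first by move: dys; rewrite dqs => -[].
by exists (y :: w); rewrite /= qy yw wy sw.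
Qed.

Lemma dist_triangle q p s : d q s <= d q p + d p s.
Proof.
have [w1 [qw1 w1p <-]] := geodesic_exists q p.
have [w2 [pw2 w2s <-]] := geodesic_exists p s.
have := @dist_le_walk q (w1 ++ w2).
by rewrite cat_path last_cat w1p w2s qw1 pw2 size_cat; apply.
Qed.

Lemma on_shortestE q s p : on_shortest e q s p <-> d q p + d p s = d q s.
Proof.
split=> [[w [[qw wq w_min] pw]] | dqps].
  have [w0 [qw0 w0s sw0]] := geodesic_exists q s.
  have {w_min} w_geo : size w <= d q s by rewrite -sw0; apply: w_min.
  apply/eqP; rewrite eqn_leq dist_triangle andbT; apply: leq_trans w_geo.
  move: pw; rewrite inE => /predU1P [->|pw]; first by rewrite d_refl -wq dist_le_walk.
  case/splitPr: pw qw wq => w1 w2; rewrite cat_path last_cat /= => /and3P [qw1 w1p pw2] w2s.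
  rewrite size_cat /= addnS -addSn leq_add //; last by rewrite -w2s dist_le_walk.
  by rewrite -(size_rcons w1 p) -[X in d q X](last_rcons q w1) dist_le_walk // rcons_path qw1.
have [w1 [qw1 w1p sw1]] := geodesic_exists q p.
have [w2 [pw2 w2s sw2]] := geodesic_exists p s.
exists (w1 ++ w2); split; last by rewrite -cat_cons mem_cat -w1p mem_last.
split; first by rewrite cat_path qw1 w1p pw2.
  by rewrite last_cat w1p w2s.
by move=> w' qw' w's; rewrite size_cat sw1 sw2 dqps -w's dist_le_walk.
Qed.

Lemma strong_resolving_compl (Q : {set T}) :
  {in ~: Q &, forall p q, p != q ->
     exists2 s, s \in Q & d q p + d p s = d q s \/ d p q + d q s = d p s} ->
  strong_resolving e Q.
Proof.
move=> resolve p q pq.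
have [pQ | ] := boolP (p \in ~: Q); last first.
  by rewrite inE negbK => pQ; exists p; last by left; apply/on_shortestE; rewrite d_refl addn0.
have [qQ | ] := boolP (q \in ~: Q); last first.
  by rewrite inE negbK => qQ; exists q; last by right; apply/on_shortestE; rewrite d_refl addn0.
have [s sQ [] /on_shortestE resolved] := resolve p q pQ qQ pq.
- by exists s => //; left.
- by exists s => //; right.
Qed.

Lemma strong_resolving_compl_dist_lt (Q : {set T}) (D : nat) :
  (forall x y, d x y = d y x) -> (forall x y, d x y <= D) ->
  strong_resolving e Q -> {in ~: Q &, forall p q, p != q -> d p q < D}.
Proof.
move=> d_sym d_le resolving p q; rewrite !inE => pQ qQ pq.
rewrite ltn_neqAle d_le andbT; apply/eqP => dpqD.
have [s sQ [] /on_shortestE dist_s] := resolving p q pq.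
- have := d_le q s; rewrite -dist_s d_sym dpqD -{2}[D]addn0 leq_add2l leqn0.
  by move/eqP/d_eq0 => ps; rewrite ps sQ in pQ.
- have := d_le p s; rewrite -dist_s dpqD -{2}[D]addn0 leq_add2l leqn0.
  by move/eqP/d_eq0 => qs; rewrite qs sQ in qQ.
Qed.

End DistanceFunction.

Lemma set2I_neq0 (T : finType) (a b c d : T) :
  ([set a; b] :&: [set c; d] != set0) = [|| a == c, a == d, b == c | b == d].
Proof.
apply/set0Pn/idP => [[x]|].
  by rewrite !inE => /andP [/orP [] /eqP -> /orP [] /eqP ->]; rewrite eqxx ?orbT.
by case/or4P => /eqP ->; [exists c | exists d | exists c | exists d]; rewrite !inE !eqxx ?orbT.
Qed.

(* Every pair-level fact below is a finite check on the equality pattern of its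
   index arguments, which [case_eqs] enumerates. *)
Ltac case_eqs :=
  repeat (rewrite ?eqxx /=; match goal with |- context[?a == ?b] =>
    is_var a; is_var b; case: (a =P b) => [?|?]; subst end);
  rewrite ?eqxx /=.

Definition pair_dist (n : nat) (r j s k : 'I_n) : nat :=
  if r == s then (if j == k then 0 else 1)
  else if (j == s) && (k == r) then 1
  else if (j == s) || (k == r) then 2 else 3.

Definition pair_adj (n : nat) (r j s k : 'I_n) : bool :=
  (r == s) || ((r == k) && (j == s)).

Section PairDistance.

Variable n : nat.
Implicit Types r j s k a b : 'I_n.

Lemma pair_dist_sym r j s k : pair_dist r j s k = pair_dist s k r j.
Proof. by rewrite /pair_dist; case_eqs. Qed.

Lemma pair_dist_le3 r j s k : pair_dist r j s k <= 3.
Proof. by rewrite /pair_dist; case_eqs. Qed.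

Lemma pair_dist_edge r j a b s k : r != j -> a != b -> s != k ->
  pair_adj r j a b -> pair_dist r j s k <= (pair_dist a b s k).+1.
Proof. by rewrite /pair_adj /pair_dist; case_eqs. Qed.

Definition pair_step r j s k : 'I_n * 'I_n :=
  if (r == s) || ((j == s) && (k == r)) then (s, k)
  else if j == s then (s, r) else (r, s).

Lemma pair_step_descent r j s k : r != j -> s != k -> (r, j) != (s, k) ->
  let: (a, b) := pair_step r j s k in
  [/\ a != b, pair_adj r j a b & (pair_dist a b s k).+1 = pair_dist r j s k].
Proof. by rewrite /pair_step /pair_adj /pair_dist xpair_eqE; case_eqs. Qed.

Lemma pair_dist_lt3_star_partner h j1 j2 s k :
  h != j1 -> h != j2 -> j1 != j2 -> s != k -> s != h ->
  pair_dist h j1 s k < 3 -> pair_dist h j2 s k < 3 -> k = h.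
Proof. by rewrite /pair_dist; case_eqs. Qed.

Lemma pair_dist_lt3_same_partner h s s' :
  s != h -> s' != h -> pair_dist s h s' h < 3 -> s = s'.
Proof. by rewrite /pair_dist; case_eqs. Qed.

Definition pair_resolver z o t r j s k : 'I_n * 'I_n :=
  if (r == z) && (s == z) then (if k != o then (k, z) else (j, z)) else (o, t).

Lemma pair_resolver_spec z o t r j s k :
  z != o -> z != t -> o != t -> r != j -> s != k -> (r, j) != (s, k) ->
  (r == z) || (r == o) && (j == z) -> (s == z) || (s == o) && (k == z) ->
  let: (a, b) := pair_resolver z o t r j s k in
  [/\ a != b, ~~ ((a == z) || (a == o) && (b == z)) &
      (pair_dist s k r j + pair_dist r j a b == pair_dist s k a b)
   || (pair_dist r j s k + pair_dist s k a b == pair_dist r j a b)].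
Proof.
move=> zo zt ot rj sk rjsk.
case/orP=> [/eqP ?|/andP [/eqP ? /eqP ?]]; case/orP=> [/eqP ?|/andP [/eqP ? /eqP ?]];
  by subst; move: zo zt ot rj sk rjsk; rewrite xpair_eqE /pair_resolver /pair_dist; case_eqs.
Qed.

End PairDistance.

Section LineGraphCoordinates.

(* The edge {v_r, v_r v_j} of H(n) is read as the pair (hub, partner) = (r, j);
   [n = m.+1] only provides the default [ord0], which is never reached. *)
Variable m : nat.
Local Notation n := m.+1.
Local Notation pair_vertex := {q : 'I_n * 'I_n | q.1 < q.2}.

Definition hub (E : Lvert n) : 'I_n := odflt ord0 [pick r | inl r \in val E].

Definition partner (E : Lvert n) : 'I_n :=
  if [pick p | inr p \in val E] is Some p then
    if (val p).1 == hub E then (val p).2 else (val p).1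
  else ord0.

Lemma hubE (E : Lvert n) r (p : pair_vertex) : val E = [set inl r; inr p] -> hub E = r.
Proof.
move=> Edef; rewrite /hub; case: pickP => [x|]; rewrite Edef ?inE /=.
  by case/orP=> /eqP // [].
by move/(_ r); rewrite !inE eqxx.
Qed.

Lemma partnerE (E : Lvert n) r (p : pair_vertex) : val E = [set inl r; inr p] ->
  partner E = if (val p).1 == r then (val p).2 else (val p).1.
Proof.
move=> Edef; rewrite /partner (hubE Edef); case: pickP => [x|]; rewrite Edef ?inE /=.
  by move=> /eqP [->].
by move/(_ p); rewrite !inE eqxx orbT.
Qed.

Lemma Lvert_spec (E : Lvert n) : exists p : pair_vertex,
  val E = [set inl (hub E); inr p] /\
  (val p == (hub E, partner E)) || (val p == (partner E, hub E)).
Proof.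
have [r [p [Edef rp]]] : exists r (p : pair_vertex),
    val E = [set inl r; inr p] /\ (r == (val p).1) || (r == (val p).2).
  case: E => S /= /existsP [x /existsP [y /andP [xy /eqP ->]]].
  case: x y xy => [a|a] [b|b] //= ab; first by exists a, b.
  by exists b, a; rewrite setUC.
exists p; rewrite (hubE Edef) (partnerE Edef) Edef; split=> //.
by case: p rp {Edef} => -[a b] /= _; rewrite !xpair_eqE; case_eqs.
Qed.

Lemma hub_neq_partner (E : Lvert n) : hub E != partner E.
Proof.
have [[[a b] /= ab] [_ /=]] := Lvert_spec E.
by rewrite !xpair_eqE => /orP [] /andP [/eqP<- /eqP<-];
  apply/eqP => ab'; move: ab; rewrite ab' ltnn.
Qed.

Lemma Lvert_inj (E F : Lvert n) : hub E = hub F -> partner E = partner F -> E = F.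
Proof.
have [[[a b] /= ab] [Edef /= Ep]] := Lvert_spec E.
have [[[c d] /= cd] [Fdef /= Fp]] := Lvert_spec F.
move=> hEF pEF; apply: val_inj; rewrite /= Edef Fdef hEF; congr [set _; inr _].
apply: val_inj; move: Ep Fp; rewrite hEF pEF !xpair_eqE /=.
by move=> /orP [] /andP [/eqP ? /eqP ?] /orP [] /andP [/eqP ? /eqP ?]; subst;
  congr (_, _); apply: val_inj; lia.
Qed.

Lemma Lvert_coord_neq (E F : Lvert n) :
  E != F -> (hub E, partner E) != (hub F, partner F).
Proof. by apply: contra_neq => -[]; apply: Lvert_inj. Qed.

Lemma exists_Lvert (r o : 'I_n) : r != o -> exists E : Lvert n, hub E = r /\ partner E = o.
Proof.
move=> ro.
have [p rp po] : exists2 p : pair_vertex, @Hadj n (inl r) (inr p) &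
    (if (val p).1 == r then (val p).2 else (val p).1) = o.
  case: (ltngtP r o) => [lt|gt|/val_inj eq]; last by rewrite eq eqxx in ro.
  - by exists (exist _ (r, o) lt); rewrite /= eqxx.
  - by exists (exist _ (o, r) gt); rewrite /= ?eqxx ?orbT // eq_sym (negbTE ro).
have Eedge : is_edge (@Hadj n) [set inl r; inr p].
  by apply/existsP; exists (inl r); apply/existsP; exists (inr p); rewrite rp eqxx.
exists (exist (fun S : {set Hvert n} => is_edge (@Hadj n) S) _ Eedge).
by rewrite (@hubE _ r p) // (@partnerE _ r p).
Qed.

Lemma LadjE (E F : Lvert n) :
  Ladj E F = (E != F) && pair_adj (hub E) (partner E) (hub F) (partner F).
Proof.
rewrite /Ladj /line_adj val_eqE; have [-> | nEF] //= := eqVneq E F.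
have [[[a b] /= ab] [-> /= Ep]] := Lvert_spec E.
have [[[c d] /= cd] [-> /= Fp]] := Lvert_spec F.
have {}nEF : ~ (hub E = hub F /\ partner E = partner F).
  by case=> hEF pEF; move: nEF; rewrite (Lvert_inj hEF pEF) eqxx.
rewrite set2I_neq0 !eqE /= -[exist _ (a, b) ab == _]val_eqE /= xpair_eqE /pair_adj.
move: (hub E) (partner E) (hub F) (partner F) nEF Ep Fp ab cd => r j s k nEF.
rewrite !xpair_eqE.
move=> /orP [] /andP [/eqP ? /eqP ?] /orP [] /andP [/eqP ? /eqP ?] ab cd; subst;
  case_eqs; try lia; by case: nEF.
Qed.

Definition Ldist (E F : Lvert n) : nat :=
  pair_dist (hub E) (partner E) (hub F) (partner F).

Lemma Ldist_refl E : Ldist E E = 0.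
Proof. by rewrite /Ldist /pair_dist !eqxx. Qed.

Lemma Ldist_eq0 E F : Ldist E F = 0 -> E = F.
Proof.
rewrite /Ldist /pair_dist; case: eqP => [hEF|_]; last by case: ifP => //; case: ifP.
by case: eqP => // pEF _; apply: Lvert_inj.
Qed.

Lemma Ldist_sym E F : Ldist E F = Ldist F E.
Proof. exact: pair_dist_sym. Qed.

Lemma Ldist_le3 E F : Ldist E F <= 3.
Proof. exact: pair_dist_le3. Qed.

Lemma Ldist_edge E F G : Ladj E F -> Ldist E G <= (Ldist F G).+1.
Proof. by rewrite LadjE => /andP [_]; apply: pair_dist_edge; apply: hub_neq_partner. Qed.

Lemma Ldist_descent E G : E != G -> exists2 F, Ladj E F & (Ldist F G).+1 = Ldist E G.
Proof.
move=> EG.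
have := pair_step_descent (hub_neq_partner E) (hub_neq_partner G) (Lvert_coord_neq EG).
case: pair_step => a b [ab]; have [F [<- <-] adj dist] := exists_Lvert ab.
exists F => //; rewrite LadjE adj andbT.
by apply/eqP => EF; move: dist; rewrite -EF => /esym /n_Sn.
Qed.

Definition star (h : 'I_n) : {set Lvert n} := [set E | hub E == h].

Lemma card_star h : #|star h| = m.
Proof.
have partner_inj : {in star h &, injective partner}.
  by move=> E F; rewrite !inE => /eqP hE /eqP hF; apply: Lvert_inj; rewrite hE hF.
transitivity #|[set~ h]|; last by rewrite cardsC1 card_ord.
rewrite -(card_in_imset partner_inj); apply: eq_card => o.
rewrite !inE; apply/imsetP/idP => [[E]|ho].
  by rewrite inE => /eqP <- ->; rewrite eq_sym hub_neq_partner.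
have [E [hE <-]] : exists E, hub E = h /\ partner E = o by apply: exists_Lvert; rewrite eq_sym.
by exists E; rewrite ?inE ?hE.
Qed.

Lemma card_Lvert : #|Lvert n| = n * m.
Proof.
rewrite -sum1_card (partition_big hub xpredT) //=.
rewrite (eq_bigr (fun _ => m)) => [|h _]; last by rewrite sum1dep_card card_star.
by rewrite sum_nat_const card_ord.
Qed.

Lemma nondiametral_off_star (S : {set Lvert n}) E1 E2 :
  {in S &, forall E F, E != F -> Ldist E F < 3} ->
  E1 \in S -> E2 \in S -> E1 != E2 -> hub E1 = hub E2 ->
  #|S :\: star (hub E1)| <= 1.
Proof.
move=> near E1S E2S E12 hub12.
have partner12 : partner E1 != partner E2 by apply: contra_neq E12; apply: Lvert_inj.
have partner_off : {in S :\: star (hub E1), forall F, partner F = hub E1}.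
  move=> F; rewrite !inE => /andP [hF FS].
  have E1F : E1 != F by apply: contraNneq hF => <-.
  have E2F : E2 != F by apply: contraNneq hF => <-; rewrite hub12.
  apply: (pair_dist_lt3_star_partner (hub_neq_partner E1) _ partner12 (hub_neq_partner F) hF).
  - by rewrite hub12 hub_neq_partner.
  - exact: near.
  - by rewrite hub12; exact: near.
apply/card_le1_eqP => F G FS GS.
have [pF pG] := (partner_off F FS, partner_off G GS).
move: FS GS; rewrite !inE => /andP [hF FS] /andP [hG GS].
have [// | FG] := eqVneq F G.
apply: Lvert_inj; last by rewrite pF pG.
apply/esym/(pair_dist_lt3_same_partner hF hG).
by move: (near F G FS GS FG); rewrite /Ldist pF pG.
Qed.

Lemma nondiametral_card_le (S : {set Lvert n}) :
  {in S &, forall E F, E != F -> Ldist E F < 3} -> #|S| <= n.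
Proof.
move=> near.
have [/existsP [E1 /existsP [E2 /and4P [E1S E2S E12 /eqP hub12]]] | hub_inj] :=
  boolP [exists E1, exists E2, [&& E1 \in S, E2 \in S, E1 != E2 & hub E1 == hub E2]].
  rewrite -(cardsID (star (hub E1)) S); apply: leq_trans (leq_add _ _) (_ : m + 1 <= n).
  - by rewrite -[X in _ <= X](card_star (hub E1)) subset_leq_card // subsetIr.
  - exact: nondiametral_off_star near E1S E2S E12 hub12.
  - by rewrite addn1.
have {}hub_inj : {in S &, injective hub}.
  move=> E F ES FS hEF; apply/eqP; apply: contraNT hub_inj => EF.
  by apply/existsP; exists E; apply/existsP; exists F; rewrite ES FS EF hEF eqxx.
by rewrite -(card_in_imset hub_inj) -[X in _ <= X]card_ord max_card.
Qed.

Lemma strong_resolving_card_ge (Q : {set Lvert n}) :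
  strong_resolving (@Ladj n) Q -> n * (m - 1) <= #|Q|.
Proof.
move=> resolving.
have near := strong_resolving_compl_dist_lt Ldist_refl Ldist_eq0 Ldist_edge Ldist_descent
  Ldist_sym Ldist_le3 resolving.
have := nondiametral_card_le near; have := cardsC Q; rewrite card_Lvert; lia.
Qed.

Definition star_plus (z o : 'I_n) : {set Lvert n} :=
  [set E | (hub E == z) || (hub E == o) && (partner E == z)].

Lemma card_star_plus z o : o != z -> #|star_plus z o| = n.
Proof.
move=> oz; have [E [hE pE]] := exists_Lvert oz.
have -> : star_plus z o = E |: star z.
  apply/setP => F; rewrite !inE orbC; congr (_ || _).
  apply/andP/eqP => [[/eqP hF /eqP pF]|->]; last by rewrite hE pE.
  by apply: Lvert_inj; rewrite ?hF ?pF.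
by rewrite cardsU1 card_star inE hE (negbTE oz).
Qed.

Lemma strong_resolving_compl_star_plus z o t :
  z != o -> z != t -> o != t -> strong_resolving (@Ladj n) (~: star_plus z o).
Proof.
move=> zo zt ot.
apply: (strong_resolving_compl Ldist_refl Ldist_eq0 Ldist_edge Ldist_descent) => p q.
rewrite !inE !negbK => pI qI pq.
have := pair_resolver_spec zo zt ot (hub_neq_partner p) (hub_neq_partner q)
  (Lvert_coord_neq pq) pI qI.
case: pair_resolver => a b [ab]; have [s [<- <-] sI dist] := exists_Lvert ab.
exists s; first by rewrite !inE sI.
by case/orP: dist => /eqP; [left|right].
Qed.

End LineGraphCoordinates.

Theorem theorem3p10 (n : nat) : 5 <= n ->
  is_strong_metric_dim (@Ladj n) (n * (n - 2)).
Proof.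
case: n => [|m] // m_ge4; rewrite subSS.
pose o : 'I_m.+1 := inord 1; pose t : 'I_m.+1 := inord 2.
have [zo zt ot] : [/\ ord0 != o, ord0 != t & o != t].
  by rewrite -!val_eqE /= !inordK //; lia.
split=> [|Q]; last exact: strong_resolving_card_ge.
exists (~: star_plus ord0 o); split; first exact: strong_resolving_compl_star_plus ot.
have := cardsC (star_plus ord0 o); rewrite card_star_plus 1?eq_sym // card_Lvert; nia.
Qed.
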